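(* Let $A$ be a countably infinite set and $f:A\to A$ a bijection. Then there exist an integer $n\ge1$ and a binary operation $*$ on $A$ such that $(A,* )$ is a group isomorphic to $(\mathbb{Z}^n,+)$ and $f$ is an automorphism of $(A,* )$ if and only if all of the following hold: (1) $f$ has at least one cycle of length $1$ (a fixed point); fix one such fixed point $a_0$ (playing the role of the zero cycle), and call the cycles of $f$ other than $\{a_0\}$ non-zero cycles; (2) the set of distinct lengths of cycles of $f$ is finite; (3) if $f$ has a non-zero cycle of length $k$, then $f$ has infinitely many cycles of length $k$; (4) if $f$ has a chain, then $f$ has infinitely many chains; (5) if $f$ has non-zero cycles of lengths $\alpha$ and $\beta$, then $f$ has a cycle of length $\mathrm{lcm}(\alpha,\beta)$.
   Context: For a bijection $f$ of a set $A$, a cycle is a finite sequence $a_1,\dots,a_m$ of distinct elements with $f(a_j)=a_{j+1}$ for $j<m$ and $f(a_m)=a_1$ (of length $m$); a chain is a two-sided infinite sequence $\dots,a_{-1},a_0,a_1,\dots$ of distinct elements with $f(a_j)=a_{j+1}$ for all $j$. Every element of $A$ lies in exactly one cycle or chain. In the paper, ''non-zero cycle'' refers to cycles other than the one that would correspond to the identity element; here this is expressed via the chosen fixed point $a_0$. *)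

From mathcomp Require Import all_boot all_order all_algebra.
From mathcomp Require Import boolp classical_sets cardinality.
Set Implicit Arguments. Unset Strict Implicit. Unset Printing Implicit Defensive.
Import GRing.Theory.
Local Open Scope classical_set_scope.

(* The f-orbit of x (for a bijection f): all y reachable from x or from which x
   is reachable by forward iteration. Every cycle / chain of f is such an orbit. *)
Definition orbit_of (A : Type) (f : A -> A) (x : A) : set A :=
  [set y | exists n : nat, y = iter n f x \/ x = iter n f y].

Definition period (A : Type) (f : A -> A) (x : A) (m : nat) : Prop :=
  (0 < m)%N /\ iter m f x = x /\ (forall k : nat, (0 < k < m)%N -> iter k f x <> x).

Definition is_cycle (A : Type) (f : A -> A) (C : set A) (m : nat) : Prop :=
  exists x, C = orbit_of f x /\ period f x m.

Definition is_chain (A : Type) (f : A -> A) (C : set A) : Prop :=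
  exists x, C = orbit_of f x /\ (forall m : nat, (0 < m)%N -> iter m f x <> x).

Definition countably_infinite (A : Type) : Prop :=
  exists g : nat -> A, bijective g.

Definition group_iso_Zn (A : Type) (op : A -> A -> A) (n : nat) : Prop :=
  (forall x y z, op x (op y z) = op (op x y) z) /\
  (exists e : A, (forall x, op e x = x /\ op x e = x) /\
                 (forall x, exists y, op x y = e /\ op y x = e)) /\
  (exists phi : A -> 'rV[int]_n, bijective phi /\
                 forall x y, phi (op x y) = (phi x + phi y)%R).

Definition is_automorphism (A : Type) (op : A -> A -> A) (f : A -> A) : Prop :=
  bijective f /\ forall x y, f (op x y) = op (f x) (f y).

From Stdlib Require Import ClassicalEpsilon.
From HB Require Import structures.
From mathcomp Require Import all_boot all_order all_algebra all_field.
From mathcomp Require Import boolp classical_sets cardinality functions.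
From mathcomp Require Import zify ring.
Set Implicit Arguments. Unset Strict Implicit. Unset Printing Implicit Defensive.
Import GRing.Theory Num.Theory.
Local Open Scope classical_set_scope.

(* Through a group isomorphism with Z^n, an automorphism becomes v |-> v *m M for a
   unimodular integer matrix M, so the theorem classifies the orbit structures of such
   maps up to conjugacy.  For necessity: the periods of M are bounded because the kernels
   of M^(j!) - 1 form a stationary chain; the orbits of the vectors 2^m v are pairwise
   distinct because divisibility by a power of 2 is preserved by M and by its inverse;
   and if v, w have periods a, b, pigeonholing the periods of v + m w for m <= lcm(a, b)
   yields a vector of period lcm(a, b).  For sufficiency, the companion matrices of the
   cyclotomic polynomials Phi_d (every nonzero vector has period d) and of X^2 - 3X + 1
   (no nonzero vector is periodic) are glued block-diagonally to realize the prescribed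
   finite, lcm-closed set of orbit types.  Two bijections of countable sets having, for
   each orbit type, equinumerous orbits of that type are conjugate, and conjugating
   v |-> v *m M back to the set transports the group structure of Z^n. *)

(** * Periods and orbit types *)

Section Periods.
Variables (T : Type) (f : T -> T).

Definition aperiodic (x : T) : Prop := forall m, (0 < m)%N -> iter m f x <> x.

Lemma iter_mul_fixed k x q : iter k f x = x -> iter (q * k) f x = x.
Proof. by move=> fix_k; elim: q => [|q IH] //; rewrite mulSn iterD IH fix_k. Qed.

Lemma period_dvdP x p k : period f x p -> iter k f x = x <-> (p %| k)%N.
Proof.
move=> [p_gt0 [fix_p min_p]]; split => [fix_k|/dvdnP [q ->]]; last exact: iter_mul_fixed.
case: (posnP (k %% p)) => [/eqP //|mod_gt0]; exfalso.
apply: (min_p (k %% p)); first by rewrite mod_gt0 ltn_pmod.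
by rewrite -{2}fix_k {2}(divn_eq k p) addnC iterD iter_mul_fixed.
Qed.

Lemma period_unique x p q : period f x p -> period f x q -> p = q.
Proof.
move=> xp xq; apply/eqP; rewrite eqn_dvd; apply/andP; split.
  by apply/(period_dvdP _ xp); case: xq => _ [].
by apply/(period_dvdP _ xq); case: xp => _ [].
Qed.

Lemma periodP x p : (0 < p)%N -> (forall k, iter k f x = x <-> (p %| k)%N) -> period f x p.
Proof.
move=> p_gt0 fixP; split => //; split; first exact/fixP.
by move=> k /andP [k_gt0 k_lt] /fixP /(dvdn_leq k_gt0); rewrite leqNgt k_lt.
Qed.

Lemma period_exists x k : (0 < k)%N -> iter k f x = x -> exists p, period f x p.
Proof.
elim/ltn_ind: k => k IH k_gt0 fix_k.
case: (pselect (exists2 j, (0 < j < k)%N & iter j f x = x)) => [[j /andP [j_gt0 jk] fix_j]|].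
  exact: IH fix_j.
by move=> min_k; exists k; split => //; split => // j j_lt fix_j; apply: min_k; exists j.
Qed.

Lemma period_or_aperiodic x : (exists p, period f x p) \/ aperiodic x.
Proof.
case: (pselect (exists2 m, (0 < m)%N & iter m f x = x)) => [[m m_gt0 fix_m]|nfix].
  by left; exact: period_exists fix_m.
by right => m m_gt0 fix_m; apply: nfix; exists m.
Qed.

Lemma period_not_aperiodic x p : period f x p -> ~ aperiodic x.
Proof. by move=> [p_gt0 [fix_p _]] /(_ p p_gt0). Qed.

Lemma period1_fixed x : f x = x -> period f x 1.
Proof. by move=> fx; split => //; split => // -[|j] /andP []. Qed.

Definition orbit_type (x : T) (t : option nat) : Prop :=
  if t is Some k then period f x k else aperiodic x.

Definition orbits_of_type (t : option nat) : set (set T) :=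
  [set D | exists x, D = orbit_of f x /\ orbit_type x t].

Definition nonfixed_types (a0 : T) : set (option nat) :=
  [set t | exists2 x, x <> a0 & orbit_type x t].

Lemma orbit_type_exists x : exists t, orbit_type x t.
Proof.
by case: (period_or_aperiodic x) => [[k xk]|nfix]; [exists (Some k) | exists None].
Qed.

Lemma orbit_type_unique x t t' : orbit_type x t -> orbit_type x t' -> t = t'.
Proof.
case: t t' => [k|] [k'|] //= xt xt'; first by rewrite (period_unique xt xt').
- by case: (period_not_aperiodic xt xt').
- by case: (period_not_aperiodic xt' xt).
Qed.

End Periods.

Section Conjugation.
Variables (T U : Type) (f : T -> T) (g : U -> U) (h : U -> T).
Hypotheses (h_inj : injective h) (h_conj : forall x, h (g x) = f (h x)).

Lemma iter_conj k x : h (iter k g x) = iter k f (h x).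
Proof. by elim: k => [|k IH] //=; rewrite h_conj IH. Qed.

Lemma fixed_conj k x : iter k f (h x) = h x <-> iter k g x = x.
Proof. by rewrite -iter_conj; split => [/h_inj|->]. Qed.

Lemma period_conj x k : period f (h x) k <-> period g x k.
Proof.
rewrite /period fixed_conj; split => -[k_gt0 [fix_k min_k]]; do 2!split => //.
  by move=> j /min_k; rewrite fixed_conj.
by move=> j /min_k; rewrite -fixed_conj.
Qed.

Lemma aperiodic_conj x : aperiodic f (h x) <-> aperiodic g x.
Proof. by split => nfix m /nfix; rewrite fixed_conj. Qed.

Lemma orbit_type_conj x t : orbit_type f (h x) t <-> orbit_type g x t.
Proof. by case: t => [k|] /=; [exact: period_conj | exact: aperiodic_conj]. Qed.

Lemma orbit_of_conj x y : orbit_of f (h x) (h y) <-> orbit_of g x y.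
Proof.
split => -[k [e|e]]; exists k.
- by left; apply: h_inj; rewrite iter_conj.
- by right; apply: h_inj; rewrite iter_conj.
- by left; rewrite e iter_conj.
- by right; rewrite e iter_conj.
Qed.

End Conjugation.

Lemma orbit_invariant (T : Type) (f : T -> T) (P : T -> Prop) :
  (forall x, P (f x) <-> P x) -> forall x y, orbit_of f x y -> (P x <-> P y).
Proof.
move=> Pf; suff Piter n x : P (iter n f x) <-> P x.
  by move=> x y [n [->|->]]; rewrite Piter.
by elim: n => [|n IH] //=; rewrite Pf.
Qed.

Lemma orbit_of_refl (T : Type) (f : T -> T) x : orbit_of f x x.
Proof. by exists 0%N; left. Qed.

Lemma iter_inj (T : Type) (f : T -> T) n : injective f -> injective (iter n f).
Proof. by move=> f_inj; elim: n => // n IH x y /f_inj /IH. Qed.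

Lemma orbit_of_fixed (T : Type) (f : T -> T) a :
  injective f -> f a = a -> orbit_of f a = [set a].
Proof.
move=> f_inj fa; have iter_a n : iter n f a = a by elim: n => //= n ->.
apply/seteqP; split => [y [n [->|]]|y ->] //=; last exact: orbit_of_refl.
by rewrite -{1}(iter_a n) => /(iter_inj f_inj).
Qed.

Lemma orbit_type_invariant (T : Type) (f : T -> T) x y t :
  injective f -> orbit_of f x y -> orbit_type f x t -> orbit_type f y t.
Proof.
move=> f_inj xy; have type_f w : orbit_type f (f w) t <-> orbit_type f w t.
  exact: (orbit_type_conj f_inj).
exact: (orbit_invariant (P := orbit_type f ^~ t) type_f xy).1.
Qed.

(** * Conjugacy of bijections with equinumerous orbits of each type *)

Section IntegerIteration.
Variables (T : Type) (f f' : T -> T).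
Hypotheses (fK : cancel f f') (f'K : cancel f' f).
Local Open Scope ring_scope.

Definition iterz (z : int) (x : T) : T :=
  match z with Posz n => iter n f x | Negz n => iter n.+1 f' x end.

Lemma iterzN (n : nat) x : iterz (- n%:Z) x = iter n f' x.
Proof. by case: n => // n; rewrite -NegzE. Qed.

Lemma iterK n : cancel (iter n f) (iter n f').
Proof. by elim: n => // n IH x; rewrite iterSr iterS fK IH. Qed.

Lemma iterKV n : cancel (iter n f') (iter n f).
Proof. by elim: n => // n IH x; rewrite iterSr iterS f'K IH. Qed.

Lemma iterzS z x : iterz (z + 1) x = f (iterz z x).
Proof.
case: z => n; first by rewrite -PoszD addn1.
have -> : Negz n + 1 = - n%:Z by rewrite NegzE intS; ring.
by rewrite iterzN /= f'K.
Qed.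

Lemma iterzB1 z x : iterz (z - 1) x = f' (iterz z x).
Proof. by rewrite -{2}(subrK 1 z) iterzS fK. Qed.

Lemma iterzD a b x : iterz (a + b) x = iterz a (iterz b x).
Proof.
elim/int_ind: a => [|n IH|n IH]; first by rewrite add0r.
  by rewrite -addn1 PoszD addrAC !iterzS IH.
have -> : - n.+1%:Z + b = - n%:Z + b - 1 by rewrite intS; ring.
by rewrite iterzB1 IH -iterzB1; congr iterz; rewrite intS; ring.
Qed.

Lemma iterzK z : cancel (iterz z) (iterz (- z)).
Proof. by move=> x; rewrite -iterzD addNr. Qed.

Lemma iterz_eqE z z' x : iterz z x = iterz z' x <-> iterz (- z' + z) x = x.
Proof.
rewrite iterzD; split => [->|e]; first exact: iterzK.
by rewrite -{2}e -iterzD subrr.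
Qed.

Lemma orbit_ofE x y : orbit_of f x y <-> exists z, y = iterz z x.
Proof.
split => [[n [->|->]]|[[n|n] ->]]; first by exists n.
- by exists (- n%:Z); rewrite iterzN iterK.
- by exists n; left.
- by exists n.+1; right; rewrite iterKV.
Qed.

Lemma orbit_of_sym x y : orbit_of f x y -> orbit_of f y x.
Proof. by rewrite !orbit_ofE => -[z ->]; exists (- z); rewrite iterzK. Qed.

Lemma orbit_of_trans x y w : orbit_of f x y -> orbit_of f y w -> orbit_of f x w.
Proof. by rewrite !orbit_ofE => -[z ->] [z' ->]; exists (z' + z); rewrite iterzD. Qed.

Lemma orbit_of_eq x y : orbit_of f x y -> orbit_of f x = orbit_of f y.
Proof.
move=> xy; apply/seteqP; split => w; first exact/orbit_of_trans/orbit_of_sym.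
exact: orbit_of_trans.
Qed.

Lemma iterz_fixed_period x k z : period f x k -> iterz z x = x <-> (k%:Z %| z)%Z.
Proof.
move=> xk; rewrite dvdzE /=; case: z => n; first exact: period_dvdP.
rewrite -(period_dvdP _ xk); change (iter n.+1 f' x = x <-> iter n.+1 f x = x).
by split => e; rewrite -{1}e ?iterKV ?iterK.
Qed.

Lemma iterz_fixed_aperiodic x z : aperiodic f x -> iterz z x = x <-> z = 0.
Proof.
move=> nfix; split => [|->] //; case: z => [[|n]|n] //= fix_z.
  by case: (nfix n.+1 isT fix_z).
by case: (nfix n.+1 isT); rewrite -{1}fix_z iterKV.
Qed.

(* The choice depends on the orbit only, as [inhabits x] is a proof. *)
Definition orbit_rep (x : T) : T := epsilon (inhabits x) (orbit_of f x).

Lemma orbit_rep_orbit x : orbit_of f x (orbit_rep x).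
Proof. by apply: epsilon_spec; exists x; exact: orbit_of_refl. Qed.

Lemma orbit_rep_eqP x y : orbit_rep x = orbit_rep y <-> orbit_of f x y.
Proof.
split => [e|xy].
  apply: orbit_of_trans (orbit_rep_orbit x) _.
  by rewrite e; apply/orbit_of_sym/orbit_rep_orbit.
by rewrite /orbit_rep (orbit_of_eq xy); congr epsilon; exact: Prop_irrelevance.
Qed.

Lemma orbit_repK x : orbit_rep (orbit_rep x) = orbit_rep x.
Proof. by apply/esym/orbit_rep_eqP/orbit_rep_orbit. Qed.

Definition reps_of_type (t : option nat) : set T :=
  [set r | orbit_rep r = r /\ orbit_type f r t].

Lemma orbit_rep_reps x t : orbit_type f x t -> reps_of_type t (orbit_rep x).
Proof.
move=> xt; split; first exact: orbit_repK.
exact: orbit_type_invariant (can_inj fK) (orbit_rep_orbit x) xt.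
Qed.

Lemma infinite_reps_of_type t :
  infinite_set (orbits_of_type f t) -> infinite_set (reps_of_type t).
Proof.
move=> orbits_inf fin_reps; apply: orbits_inf.
apply: sub_finite_set (finite_image (orbit_of f) fin_reps) => _ [x [-> xt]].
exists (orbit_rep x); first exact: orbit_rep_reps.
exact/esym/orbit_of_eq/orbit_rep_orbit.
Qed.

End IntegerIteration.

Lemma iterz_eq_same_type (A B : Type) (f f' : A -> A) (g g' : B -> B) x y t z z' :
  cancel f f' -> cancel f' f -> cancel g g' -> cancel g' g ->
  orbit_type f x t -> orbit_type g y t ->
  iterz f f' z x = iterz f f' z' x <-> iterz g g' z y = iterz g g' z' y.
Proof.
move=> fK f'K gK g'K; rewrite (iterz_eqE fK f'K) (iterz_eqE gK g'K).
case: t => [k|] /= xt yt.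
  by rewrite (iterz_fixed_period fK f'K _ xt) (iterz_fixed_period gK g'K _ yt).
by rewrite (iterz_fixed_aperiodic f'K _ xt) (iterz_fixed_aperiodic g'K _ yt).
Qed.

Section Conjugacy.
Variables (A B : Type) (f f' : A -> A) (g g' : B -> B).
Hypotheses (fK : cancel f f') (f'K : cancel f' f) (gK : cancel g g') (g'K : cancel g' g).
Local Open Scope ring_scope.
Local Notation itf := (iterz f f').
Local Notation itg := (iterz g g').
Local Notation repf := (orbit_rep f).
Local Notation repg := (orbit_rep g).

Variables (sigma : A -> B) (off : A -> int).
Hypothesis sigma_bij : forall t, set_bij (reps_of_type f t) (reps_of_type g t) sigma.
Hypothesis offP : forall x, x = itf (off x) (repf x).

Definition orbit_extension (x : A) : B := itg (off x) (sigma (repf x)).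
Local Notation h := orbit_extension.

Lemma sigma_rep x t : orbit_type f x t -> reps_of_type g t (sigma (repf x)).
Proof.
by move=> xt; case: (sigma_bij t) => sigma_fun _ _; apply/sigma_fun/(orbit_rep_reps fK f'K).
Qed.

Lemma iterz_sigma_rep x z z' :
  itf z (repf x) = itf z' (repf x) <-> itg z (sigma (repf x)) = itg z' (sigma (repf x)).
Proof.
have [t xt] := orbit_type_exists f x; have [_ /= rt] := sigma_rep xt.
apply: iterz_eq_same_type rt => //.
exact: (orbit_rep_reps fK f'K xt).2.
Qed.

Lemma orbit_extension_conj x : h (f x) = g (h x).
Proof.
have rep_fx : repf (f x) = repf x.
  by apply/(orbit_rep_eqP fK f'K)/(orbit_of_sym fK f'K); exists 1%N; left.
rewrite /h rep_fx -(iterzS g'K); apply/iterz_sigma_rep.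
by rewrite (iterzS f'K) -offP -rep_fx -offP.
Qed.

Lemma orbit_extension_inj : injective h.
Proof.
move=> x y; rewrite /orbit_extension => hxy.
have [[t xt] [t' yt]] := (orbit_type_exists f x, orbit_type_exists f y).
have [[sx_rep sx_t] [sy_rep sy_t]] := (sigma_rep xt, sigma_rep yt).
have same_sigma : sigma (repf x) = sigma (repf y).
  rewrite -sx_rep -sy_rep; apply/(orbit_rep_eqP gK g'K)/(orbit_ofE gK g'K).
  by exists (- off y + off x); rewrite (iterzD gK g'K) hxy iterzK.
have same_type : t = t' by rewrite same_sigma in sx_t; exact: orbit_type_unique sx_t sy_t.
have same_rep : repf x = repf y.
  case: (sigma_bij t) => _ sigma_inj _; apply: sigma_inj => //; rewrite in_setE.
    exact: (orbit_rep_reps fK f'K).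
  by rewrite same_type; exact: (orbit_rep_reps fK f'K).
rewrite (offP x) (offP y) -same_rep; apply/iterz_sigma_rep.
by rewrite hxy same_rep.
Qed.

Lemma orbit_extension_surj v : exists x, h x = v.
Proof.
have [t vt] := orbit_type_exists g v.
have [_ _ /(_ _ (orbit_rep_reps gK g'K vt)) [r [r_rep rt] sr]] := sigma_bij t.
have [z ->] : exists z, v = itg z (repg v).
  by apply/(orbit_ofE gK g'K)/(orbit_of_sym gK g'K)/orbit_rep_orbit.
set x := itf z r; exists x.
have rep_x : repf x = r.
  rewrite -r_rep; apply/(orbit_rep_eqP fK f'K)/(orbit_of_sym fK f'K)/(orbit_ofE fK f'K).
  by exists z.
by rewrite /orbit_extension -sr -rep_x; apply/iterz_sigma_rep; rewrite -offP rep_x.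
Qed.

End Conjugacy.

Lemma conjugate_of_reps_bij (A B : Type) (f f' : A -> A) (g g' : B -> B) :
  cancel f f' -> cancel f' f -> cancel g g' -> cancel g' g ->
  (forall t, exists s, set_bij (reps_of_type f t) (reps_of_type g t) s) ->
  exists h, bijective h /\ forall x, h (f x) = g (h x).
Proof.
move=> fK f'K gK g'K reps_bij.
have [Sig SigP] := choice reps_bij.
have [ty tyP] := choice (orbit_type_exists f).
have off_ex x : exists z, x = iterz f f' z (orbit_rep f x).
  by apply/(orbit_ofE fK f'K)/(orbit_of_sym fK f'K)/orbit_rep_orbit.
have [off offP] := choice off_ex.
pose sigma r := Sig (ty r) r.
have sigma_bij t : set_bij (reps_of_type f t) (reps_of_type g t) sigma.
  apply: eq_set_bijLR (SigP t) => r; rewrite in_setE => -[_ rt].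
  by rewrite /sigma (orbit_type_unique (tyP r) rt).
exists (orbit_extension f g g' sigma off); split.
  rewrite -setTT_bijective; split => // [x y _ _|v _].
    exact: orbit_extension_inj sigma_bij offP x y.
  by have [x hx] := orbit_extension_surj fK f'K gK g'K sigma_bij offP v; exists x.
exact: orbit_extension_conj.
Qed.

Lemma set_bij_of_cases (A : Type) (B : pointedType) (X : set A) (Y : set B) a b :
  countable X -> countable Y ->
  (infinite_set X /\ infinite_set Y) \/ (X = set0 /\ Y = set0) \/
    (X = [set a] /\ Y = [set b]) ->
  exists s, set_bij X Y s.
Proof.
move=> cX cY [[iX iY]|[[-> ->]|[-> ->]]]; apply/card_set_bijP.
- by apply: card_eq_trans (eq_card_nat cX iX) _; rewrite card_eq_sym; exact: eq_card_nat.
- exact: card_eq00.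
- exact: eq_card1.
Qed.

Lemma reps_of_type_fixed (T : Type) (f f' : T -> T) (a0 : T) t :
  cancel f f' -> f a0 = a0 -> (forall x, orbit_type f x t -> x = a0) ->
  reps_of_type f t = if t == Some 1%N then [set a0] else set0.
Proof.
move=> fK fa0 only_a0; have a0_1 : orbit_type f a0 (Some 1%N) := period1_fixed fa0.
apply/seteqP; split => [r [_ rt]|r].
  by have ra0 := only_a0 r rt; rewrite ra0 in rt *; rewrite (orbit_type_unique rt a0_1) eqxx.
case: eqP => [-> ->|//]; split => //.
by have := orbit_rep_orbit f a0; rewrite (orbit_of_fixed (can_inj fK) fa0).
Qed.

Lemma reps_of_type_bij (A : Type) (B : pointedType) (f f' : A -> A) (g g' : B -> B) a0 b0 :
  cancel f f' -> cancel f' f -> cancel g g' -> cancel g' g -> f a0 = a0 -> g b0 = b0 ->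
  countable [set: A] -> countable [set: B] -> nonfixed_types f a0 = nonfixed_types g b0 ->
  (forall t, nonfixed_types f a0 t -> infinite_set (orbits_of_type f t)) ->
  (forall t, nonfixed_types g b0 t -> infinite_set (orbits_of_type g t)) ->
  forall t, exists s, set_bij (reps_of_type f t) (reps_of_type g t) s.
Proof.
move=> fK f'K gK g'K fa0 gb0 cA cB same_types infA infB t.
apply: (set_bij_of_cases (a := a0) (b := b0)).
- exact: sub_countable (subset_card_le (subsetT _)) cA.
- exact: sub_countable (subset_card_le (subsetT _)) cB.
case: (pselect (nonfixed_types f a0 t)) => [tA|no_x].
  have tB : nonfixed_types g b0 t by rewrite -same_types.
  by left; split; [apply: (infinite_reps_of_type fK f'K) (infA _ tA) |
                   apply: (infinite_reps_of_type gK g'K) (infB _ tB)].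
have no_y : ~ nonfixed_types g b0 t by rewrite -same_types.
have only_a0 x : orbit_type f x t -> x = a0.
  by move=> xt; apply: contra_notP no_x => xa0; exists x.
have only_b0 y : orbit_type g y t -> y = b0.
  by move=> yt; apply: contra_notP no_y => yb0; exists y.
rewrite (reps_of_type_fixed fK fa0 only_a0) (reps_of_type_fixed gK gb0 only_b0).
by case: eqP => _; [right; right | right; left].
Qed.

(** * Orbits of unimodular integer matrices *)

Local Open Scope ring_scope.

Lemma iter_mulmxr (R : pzSemiRingType) m n (M : 'M[R]_n) k (A : 'M[R]_(m, n)) :
  iter k (mulmxr M) A = A *m M ^+ k.
Proof.
elim: k => [|k IH]; first by rewrite expr0 mulmx1.
by rewrite iterS IH /= exprSr -mulmxE mulmxA.
Qed.

Lemma additive_mulmxr n (g : 'rV[int]_n -> 'rV[int]_n) :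
  (forall x y, g (x + y) = g x + g y) -> exists M : 'M[int]_n, forall v, g v = v *m M.
Proof.
move=> gD; have gB : zmod_morphism g.
  by move=> x y; apply: (addIr (g y)); rewrite -gD !subrK.
pose G : {additive 'rV[int]_n -> 'rV[int]_n} :=
  HB.pack g (GRing.isZmodMorphism.Build _ _ g gB).
exists (\matrix_(i, j) g 'e_i 0 j) => v.
rewrite mulmx_sum_row {1}[v]row_sum_delta; change g with (G : _ -> _).
rewrite raddf_sum; apply: eq_bigr => i _.
rewrite -[v 0 i]intz !scaler_int raddfMz; congr (_ *~ _).
by apply/rowP => j; rewrite !mxE.
Qed.

Lemma unitmx_of_right_inverse (R : comUnitRingType) n (M M' : 'M[R]_n) :
  (forall v : 'rV[R]_n, v *m M *m M' = v) -> M \in unitmx.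
Proof.
move=> MM'; suff /mulmx1_unit [] : M *m M' = 1%:M by [].
by apply/row_matrixP => i; rewrite !rowE mulmxA MM' mulmx1.
Qed.

Lemma orbit_type_scale (R : idomainType) n (M : 'M[R]_n) (a : R) (v : 'rV[R]_n) t :
  a != 0 -> orbit_type (mulmxr M) (a *: v) t <-> orbit_type (mulmxr M) v t.
Proof.
move=> a_ne0; have scale_conj (w : 'rV_n) : a *: (w *m M) = (a *: w) *m M.
  by rewrite scalemxAl.
exact: orbit_type_conj (scalemx_inj a_ne0) scale_conj v t.
Qed.

Lemma submx_chain_max (F : fieldType) m n (K : nat -> 'M[F]_(m, n)) :
  (forall j, (K j <= K j.+1)%MS) -> exists J, forall j, (K j <= K J)%MS.
Proof.
move=> K_step; have K_mono := homo_leq (@submx_refl F m n)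
  (fun B A C => @submx_trans F m m m n A B C) K_step.
have K_eq j j' : (j <= j')%N -> (\rank (K j') <= \rank (K j))%N -> (K j' <= K j)%MS.
  move=> le_jj' le_rank; rewrite -(mxrank_leqif_sup (K_mono _ _ le_jj')).2.
  by rewrite eqn_leq le_rank mxrankS ?K_mono.
suff [J K_J] : exists J, forall j, (J <= j)%N -> (K j <= K J)%MS.
  by exists J => j; case: (leqP J j) => [/K_J // | /ltnW /K_mono].
suff : forall d J0, (n - \rank (K J0) <= d)%N ->
    exists J, forall j, (J <= j)%N -> (K j <= K J)%MS.
  by move/(_ n 0%N); apply; rewrite leq_subr.
elim=> [|d IH] J0 rank_J0.
  by exists J0 => j le_J0j; apply: K_eq => //; move: rank_J0 (rank_leq_col (K j)); lia.
case: (pselect (exists2 j, (J0 <= j)%N & (\rank (K J0) < \rank (K j))%N)).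
  by move=> [j le_J0j lt_rank]; apply: (IH j); move: rank_J0 (rank_leq_col (K j)) lt_rank; lia.
move=> no_growth; exists J0 => j le_J0j; apply: K_eq => //.
by rewrite leqNgt; apply/negP => lt_rank; apply: no_growth; exists j.
Qed.

Lemma bounded_periods_mx (F : fieldType) n (M : 'M[F]_n) :
  exists N, forall (v : 'rV_n) p, period (mulmxr M) v p -> (p <= N)%N.
Proof.
pose K j := kermx (M ^+ j`! - 1).
have memK m (X : 'M[F]_(m, n)) j : (X <= K j)%MS <-> iter j`! (mulmxr M) X = X.
  by rewrite iter_mulmxr sub_kermx mulmxBr mulmx1 subr_eq0; split => /eqP.
have K_step j : (K j <= K j.+1)%MS by apply/memK; rewrite factS iter_mul_fixed //; apply/memK.
have [J K_J] := submx_chain_max K_step.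
exists J`! => v p vp; have p_gt0 : (0 < p)%N by case: vp.
have v_max : (v <= K (maxn p J))%MS.
  by apply/memK/(period_dvdP _ vp); rewrite dvdn_fact // p_gt0 leq_maxl.
have /memK /(period_dvdP _ vp) := submx_trans v_max (K_J _).
by apply: dvdn_leq; rewrite fact_gt0.
Qed.

Lemma bounded_periods_int n (M : 'M[int]_n) :
  exists N, forall (v : 'rV_n) p, period (mulmxr M) v p -> (p <= N)%N.
Proof.
have [N bound] := bounded_periods_mx (map_mx (intr : int -> rat) M).
exists N => v p vp; apply: (bound (map_mx intr v)).
have map_inj : injective (map_mx (intr : int -> rat) : 'rV_n -> 'rV_n).
  by move=> x y /rowP e; apply/rowP => i; move: (e i); rewrite !mxE => /intr_inj.
have map_conj (w : 'rV_n) :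
    map_mx intr (w *m M) = map_mx (intr : int -> rat) w *m map_mx intr M.
  by rewrite map_mxM.
exact/(period_conj map_inj map_conj).
Qed.

Lemma fixed_of_combinations (R : numDomainType) n (N : 'M[R]_n) (v w : 'rV[R]_n) m1 m2 :
  m1 != m2 -> (v + m1%:R *: w) *m N = v + m1%:R *: w ->
  (v + m2%:R *: w) *m N = v + m2%:R *: w -> v *m N = v /\ w *m N = w.
Proof.
move=> m12 fix1 fix2; have m12_ne0 : (m1%:R - m2%:R : R) != 0 by rewrite subr_eq0 eqr_nat.
have w_fixed : w *m N = w.
  apply: (scalemx_inj m12_ne0); rewrite scalemxAl.
  have -> : (m1%:R - m2%:R) *: w = (v + m1%:R *: w) - (v + m2%:R *: w).
    by rewrite opprD addrACA subrr add0r scalerBl.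
  by rewrite mulmxBl fix1 fix2.
by move: fix1; rewrite mulmxDl -scalemxAl w_fixed => /addIr.
Qed.

Lemma period_lcm (R : numDomainType) n (M : 'M[R]_n) (v w : 'rV[R]_n) a b :
  period (mulmxr M) v a -> period (mulmxr M) w b ->
  exists u : 'rV[R]_n, period (mulmxr M) u (lcmn a b).
Proof.
move=> va wb; set L := lcmn a b; pose u (m : nat) := v + m%:R *: w.
have L_gt0 : (0 < L)%N by rewrite lcmn_gt0; case: va => -> _; case: wb.
have fixedP p : v *m M ^+ p = v /\ w *m M ^+ p = w <-> (L %| p)%N.
  by rewrite dvdn_lcm -!iter_mulmxr (period_dvdP _ va) (period_dvdP _ wb); exact: (rwP andP).
have u_fixed p m : (L %| p)%N -> iter p (mulmxr M) (u m) = u m.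
  by move=> /fixedP [vp wp]; rewrite iter_mulmxr mulmxDl -scalemxAl vp wp.
case: (pselect (exists u : 'rV[R]_n, period (mulmxr M) u L)) => // no_u; exfalso.
have [P P_u] := choice (fun m => period_exists L_gt0 (u_fixed L m (dvdnn L))).
have P_lt m : (P m < L)%N.
  have P_dvd : (P m %| L)%N by rewrite -(period_dvdP _ (P_u m)) u_fixed.
  rewrite ltn_neqAle dvdn_leq // andbT; apply/eqP => PL.
  by apply: no_u; exists (u m); rewrite -PL.
pose F (m : 'I_L.+1) : 'I_L := Ordinal (P_lt m).
have /injectivePn [m1 [m2 m12 /(congr1 val) /= P12]] : ~~ injectiveb F.
  by apply/injectiveP => /leq_card; rewrite !card_ord ltnn.
have [p_gt0 [fix1 _]] := P_u m1; have [_ [fix2 _]] := P_u m2; rewrite -P12 in fix2.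
rewrite !iter_mulmxr in fix1 fix2.
have /fixedP /(dvdn_leq p_gt0) := fixed_of_combinations m12 fix1 fix2.
by rewrite leqNgt P_lt.
Qed.

Definition dvdmx m n (c : int) (A : 'M[int]_(m, n)) : Prop := exists B, A = c *: B.

Lemma dvdmx_factorl m n (c d : int) (A : 'M[int]_(m, n)) : dvdmx (c * d) A -> dvdmx c A.
Proof. by move=> [B ->]; exists (d *: B); rewrite scalerA. Qed.

Lemma dvdmx_mul2l m n (a c : int) (A : 'M[int]_(m, n)) :
  a != 0 -> dvdmx (a * c) (a *: A) <-> dvdmx c A.
Proof.
move=> a_ne0; split => [[B]|[B ->]]; last by exists B; rewrite scalerA.
by rewrite -scalerA => /(scalemx_inj a_ne0) ->; exists B.
Qed.

Lemma dvdmx_exp2_eq0 m n (A : 'M[int]_(m, n)) : (forall k, dvdmx (2 ^+ k) A) -> A = 0.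
Proof.
move=> dvdA; apply/matrixP => i j; rewrite mxE; apply/eqP; apply: contraT => Aij_ne0.
have [B eAB] := dvdA `|A i j|%N.
have : `|A i j|%N = (2 ^ `|A i j| * `|B i j|)%N by rewrite {1}eAB mxE abszM abszX.
have : (0 < `|B i j|)%N.
  by rewrite absz_gt0; apply: contraNneq Aij_ne0; rewrite eAB mxE => ->; rewrite mulr0.
move: `|A i j|%N (`|B i j|)%N => a b; have := ltn_expl a (ltnSn 1); nia.
Qed.

Section UnimodularOrbits.
Variables (n : nat) (M : 'M[int]_n).
Hypothesis M_unit : M \in unitmx.

Lemma mulmxr_unitK : cancel (mulmxr M : 'rV_n -> 'rV_n) (mulmxr (invmx M)).
Proof. exact: mulmxK. Qed.

Lemma mulmxr_unitKV : cancel (mulmxr (invmx M) : 'rV_n -> 'rV_n) (mulmxr M).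
Proof. exact: mulmxKV. Qed.

Lemma dvdmx_orbit c (u v : 'rV[int]_n) :
  orbit_of (mulmxr M) u v -> dvdmx c u <-> dvdmx c v.
Proof.
apply: orbit_invariant => w; split => [[B eB]|[B ->]].
  by exists (B *m invmx M); rewrite scalemxAl -eB /= mulmxK.
by exists (B *m M); rewrite /= scalemxAl.
Qed.

(* If m < m', the orbit invariance of [dvdmx (2 ^+ _)] lets divisibility of v by 2^k
   be pushed to 2^(k + m' - m), hence to all powers of 2. *)
Lemma exp2_scaled_orbit_eq (v : 'rV[int]_n) m m' : v != 0 ->
  orbit_of (mulmxr M) (2 ^+ m *: v) (2 ^+ m' *: v) -> m = m'.
Proof.
move=> v_ne0; wlog le_mm' : m m' / (m <= m')%N => [hyp|orb].
  case: (leqP m m') => [/hyp // | /ltnW le_m'm].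
  by move=> /(orbit_of_sym mulmxr_unitK mulmxr_unitKV) /(hyp _ _ le_m'm).
apply/eqP; rewrite eqn_leq le_mm' leqNgt; apply/negP => lt_mm'.
suff /dvdmx_exp2_eq0 v0 : forall k, dvdmx (2 ^+ k) v by rewrite v0 eqxx in v_ne0.
elim=> [|k IH]; first by exists v; rewrite scale1r.
have : dvdmx (2 ^+ (m' + k)) (2 ^+ m *: v).
  by rewrite (dvdmx_orbit _ orb) exprD dvdmx_mul2l // expf_neq0.
have -> : (m' + k = m + (k.+1 + (m' - m).-1))%N by lia.
by rewrite !exprD dvdmx_mul2l ?expf_neq0 // => /dvdmx_factorl.
Qed.

End UnimodularOrbits.

Lemma infinite_set_inj (T : Type) (P : set T) (F : nat -> T) :
  injective F -> (forall m, P (F m)) -> infinite_set P.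
Proof.
move=> F_inj PF finP; apply: infinite_nat.
have -> : [set: nat] = F @^-1` P by apply/seteqP; split => // m _; exact: PF.
exact: finite_preimage (fun x y _ _ => F_inj x y) finP.
Qed.

Section IntegerModel.
Variables (A : Type) (f : A -> A) (n : nat) (M : 'M[int]_n) (h : A -> 'rV[int]_n).
Hypotheses (M_unit : M \in unitmx) (h_bij : bijective h).
Hypothesis h_conj : forall x, h (f x) = h x *m M.

Let h_inj : injective h := bij_inj h_bij.
Let h_mulmxr x : h (f x) = mulmxr M (h x) := h_conj x.

Lemma cycle_lengths_finite : finite_set [set k | exists C, is_cycle f C k].
Proof.
have [N bound] := bounded_periods_int M.
apply: (@sub_finite_set _ _ `I_N.+1); last exact: finite_II.
move=> k [C [x [_ xk]]] /=; rewrite ltnS; apply: (bound (h x)).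
exact/(period_conj h_inj h_mulmxr).
Qed.

Lemma cycle_length_lcm x y a b : period f x a -> period f y b ->
  exists z, period f z (lcmn a b).
Proof.
rewrite -!(period_conj h_inj h_mulmxr) => xa yb.
have [u ul] := period_lcm xa yb; case: h_bij => h' hK h'K.
by exists (h' u); rewrite -(period_conj h_inj h_mulmxr) h'K.
Qed.

Lemma infinite_orbits_of_type x t : h x != 0 -> orbit_type f x t ->
  infinite_set (orbits_of_type f t).
Proof.
move=> hx_ne0 xt; case: h_bij => h' hK h'K.
pose u (m : nat) := h' (2 ^+ m *: h x).
apply: (infinite_set_inj (F := fun m => orbit_of f (u m))) => [m m' e|m].
  apply: (exp2_scaled_orbit_eq M_unit hx_ne0).
  rewrite -(h'K (2 ^+ m *: _)) -(h'K (2 ^+ m' *: _)); apply/(orbit_of_conj h_inj h_mulmxr).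
  by rewrite -/(u m) -/(u m') e; exact: orbit_of_refl.
exists (u m); split => //.
rewrite -(orbit_type_conj h_inj h_mulmxr) /u h'K orbit_type_scale ?expf_neq0 //.
exact/(orbit_type_conj h_inj h_mulmxr).
Qed.

End IntegerModel.

(** * Realizing orbit types by block-diagonal matrices *)

Definition nz_types n (M : 'M[int]_n) : set (option nat) :=
  nonfixed_types (mulmxr M) (0 : 'rV[int]_n).

Definition lcm_type (t t' : option nat) : option nat :=
  if t is Some a then omap (lcmn a) t' else None.

Lemma lcm_type1 t : lcm_type t (Some 1%N) = t.
Proof. by case: t => // a; rewrite /= lcmn1. Qed.

Lemma lcm_1type t : lcm_type (Some 1%N) t = t.
Proof. by case: t => // a; rewrite /= lcm1n. Qed.

Lemma orbit_type0 n (M : 'M[int]_n) : orbit_type (mulmxr M) (0 : 'rV_n) (Some 1%N).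
Proof. by apply: period1_fixed; rewrite /= mul0mx. Qed.

Section BlockSum.
Variables (n1 n2 : nat) (M1 : 'M[int]_n1) (M2 : 'M[int]_n2).
Local Notation M := (block_mx M1 0 0 M2).
Implicit Types (x : 'rV[int]_n1) (y : 'rV[int]_n2).

Lemma block_unitmx : M1 \in unitmx -> M2 \in unitmx -> M \in unitmx.
Proof. by rewrite !unitmxE det_ublock unitrM => -> ->. Qed.

Lemma iter_block_row k x y :
  iter k (mulmxr M) (row_mx x y) = row_mx (iter k (mulmxr M1) x) (iter k (mulmxr M2) y).
Proof. by elim: k => [|k IH] //=; rewrite IH /= mul_row_block !mulmx0 addr0 add0r. Qed.

Lemma fixed_block_row k x y :
  iter k (mulmxr M) (row_mx x y) = row_mx x y <->
  iter k (mulmxr M1) x = x /\ iter k (mulmxr M2) y = y.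
Proof. by rewrite iter_block_row; split => [/eq_row_mx | [-> ->]]. Qed.

Lemma orbit_type_block_row x y t1 t2 :
  orbit_type (mulmxr M1) x t1 -> orbit_type (mulmxr M2) y t2 ->
  orbit_type (mulmxr M) (row_mx x y) (lcm_type t1 t2).
Proof.
case: t1 t2 => [a|] [b|] /= xt yt.
- apply: periodP => [|k]; first by rewrite lcmn_gt0; case: xt => -> _; case: yt.
  rewrite fixed_block_row dvdn_lcm (period_dvdP _ xt) (period_dvdP _ yt).
  exact: (rwP andP).
- by move=> m m_gt0 /fixed_block_row [_]; exact: yt.
- by move=> m m_gt0 /fixed_block_row [/xt].
- by move=> m m_gt0 /fixed_block_row [/xt].
Qed.

Lemma nz_types_block : nz_types M =
  nz_types M1 `|` nz_types M2 `|` [set lcm_type t1 t2 | t1 in nz_types M1 & t2 in nz_types M2].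
Proof.
apply/seteqP; split => [t [v]|t [[[x /eqP x_ne0 xt]|[y /eqP y_ne0 yt]]|]].
- rewrite -(hsubmxK v); move: (lsubmx v) (rsubmx v) => x y /eqP.
  rewrite row_mx_eq0 negb_and => xy_ne0 xyt.
  have [[t1 xt] [t2 yt]] := (orbit_type_exists (mulmxr M1) x, orbit_type_exists (mulmxr M2) y).
  rewrite (orbit_type_unique xyt (orbit_type_block_row xt yt)).
  have [x0|x_ne0] := eqVneq x 0.
    rewrite x0 in xt xy_ne0; rewrite (orbit_type_unique xt (orbit_type0 _)) lcm_1type.
    by move: xy_ne0; rewrite eqxx => /eqP y_ne0; left; right; exists y.
  have [y0|y_ne0] := eqVneq y 0.
    rewrite y0 in yt; rewrite (orbit_type_unique yt (orbit_type0 _)) lcm_type1.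
    by left; left; exists x => //; apply/eqP.
  by right; exists t1; [exists x => //; apply/eqP | exists t2 => //; exists y => //; apply/eqP].
- exists (row_mx x 0); first by apply/eqP; rewrite row_mx_eq0 negb_and x_ne0.
  by rewrite -[t]lcm_type1; exact: orbit_type_block_row xt (orbit_type0 _).
- exists (row_mx 0 y); first by apply/eqP; rewrite row_mx_eq0 negb_and y_ne0 orbT.
  by rewrite -[t]lcm_1type; exact: orbit_type_block_row (orbit_type0 _) yt.
- move=> [t1 [x /eqP x_ne0 xt] [t2 [y _ yt] <-]].
  exists (row_mx x y); first by apply/eqP; rewrite row_mx_eq0 negb_and x_ne0.
  exact: orbit_type_block_row.
Qed.

End BlockSum.

Lemma mx_fixed_eq0 m (B : 'M[int]_m.+1) k :
  (forall z : algC, root (map_poly intr (char_poly B)) z -> z ^+ k != 1) ->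
  forall v : 'rV[int]_m.+1, v *m B ^+ k = v -> v = 0.
Proof.
move=> no_root v fix_v; pose BC := map_mx (intr : int -> algC) B.
have /Bezout_eq1_coprimepP [[u1 u2] /= Bezout] : coprimep (char_poly BC) ('X^k - 1).
  apply: Pdiv.ClosedField.root_coprimep => z; rewrite -map_char_poly => /no_root.
  by rewrite !hornerE subr_eq0.
have Cayley : horner_mx BC ('X^k - 1) * horner_mx BC u2 = 1.
  have := congr1 (horner_mx BC) Bezout.
  rewrite rmorph1 rmorphD !rmorphM /= Cayley_Hamilton mulr0 add0r => e.
  by rewrite -rmorphM mulrC rmorphM.
have map_conj (w : 'rV_m.+1) : map_mx intr (w *m B) = map_mx (intr : int -> algC) w *m BC.
  by rewrite map_mxM.
have fix_vC : map_mx intr v *m BC ^+ k = map_mx intr v.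
  by rewrite -iter_mulmxr -(iter_conj map_conj) iter_mulmxr fix_v.
have : map_mx (intr : int -> algC) v = 0.
  have -> : map_mx (intr : int -> algC) v =
      map_mx intr v *m (horner_mx BC ('X^k - 1) * horner_mx BC u2).
    by rewrite Cayley mulmx1.
  rewrite -mulmxE mulmxA rmorphB /= rmorphXn /= horner_mx_X rmorph1.
  by rewrite mulmxBr mulmx1 fix_vC subrr mul0mx.
move/matrixP => v0; apply/matrixP => i j; move: (v0 i j); rewrite !mxE.
by move/eqP; rewrite intr_eq0 => /eqP.
Qed.

Lemma exists_char_poly (p : {poly int}) m : p \is monic -> size p = m.+2 ->
  exists B : 'M[int]_m.+1, char_poly B = p.
Proof.
move=> p_monic size_p; have e : (size p).-1 = m.+1 by rewrite size_p.
exists (castmx (e, e) (companionmx p)).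
move: (companionmxK p_monic); move: (companionmx p) e; rewrite size_p => C e.
by rewrite castmx_id.
Qed.

Lemma nonzero_row m : exists v : 'rV[int]_m.+1, v != 0.
Proof. by exists (delta_mx 0 0); apply/eqP => /rowP /(_ 0); rewrite !mxE. Qed.

Lemma cyclotomic_block d : (0 < d)%N ->
  exists n (M : 'M[int]_n), M \in unitmx /\ nz_types M = [set Some d].
Proof.
move=> d_gt0; have size_Phi : size 'Phi_d = (totient d).-1.+2.
  by rewrite size_Cyclotomic prednK // totient_gt0.
have [B charB] := exists_char_poly (Cyclotomic_monic d) size_Phi.
have Bd : B ^+ d = 1.
  have X_Phi : ('X^d - 1 : {poly int}) = 'Phi_d * \prod_(e <- rem d (divisors d)) 'Phi_e.
    by rewrite -(prod_Cyclotomic d_gt0) (big_rem d) // -dvdn_divisors.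
  have : horner_mx B ('X^d - 1) = 0.
    by rewrite X_Phi rmorphM /= -charB Cayley_Hamilton mul0r.
  by rewrite rmorphB /= rmorphXn /= horner_mx_X rmorph1 => /eqP; rewrite subr_eq0 => /eqP.
have [z0 prim_z0] := C_prim_root_exists d_gt0.
have period_d (v : 'rV_(totient d).-1.+1) : v != 0 -> period (mulmxr B) v d.
  move=> v_ne0; apply: periodP => // k; rewrite iter_mulmxr.
  split => [fix_v|/dvdnP [q ->]]; last by rewrite mulnC exprM Bd expr1n mulmx1.
  apply: contraNT v_ne0 => ndvd; apply/eqP; move: fix_v; apply: mx_fixed_eq0 => z.
  rewrite charB (Cintr_Cyclotomic prim_z0) (root_cyclotomic prim_z0) => prim_z.
  by rewrite -(prim_order_dvd prim_z).
exists (totient d).-1.+1, B; split.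
  by case: (@mulmx1_unit _ _ B (B ^+ d.-1)) => //; rewrite mulmxE -exprS (prednK d_gt0) Bd.
apply/seteqP; split => [t [v /eqP v_ne0 vt]|_ ->].
  by rewrite (orbit_type_unique (t' := Some d) vt (period_d _ v_ne0)).
by have [v v_ne0] := nonzero_row (totient d).-1; exists v; [exact/eqP | exact: period_d].
Qed.

Lemma hyperbolic_root_not_unity (z : algC) k :
  (0 < k)%N -> (z - 3) * z + 1 = 0 -> z ^+ k != 1.
Proof.
move=> k_gt0 root_z; apply/eqP => zk.
have z_ne0 : z != 0 by apply: contra_eq_neq root_z => ->; rewrite mulr0 add0r oner_neq0.
have norm_z : `|z| = 1 by apply/eqP; rewrite -(pexpr_eq1 k_gt0) // -normrX zk normr1.
have z_invz : z + z^-1 = 3.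
  apply: (mulIf z_ne0); rewrite mulrDl mulVf //; apply/eqP; rewrite -subr_eq0.
  by rewrite -root_z; apply/eqP; ring.
have := ler_normD z z^-1.
by rewrite z_invz normrV ?unitfE // norm_z invr1 normr_nat -mulr2n ler_nat.
Qed.

Lemma hyperbolic_block : exists n (M : 'M[int]_n), M \in unitmx /\ nz_types M = [set None].
Proof.
pose p : {poly int} := ('X - 3%:P) * 'X + 1.
have size_p : size p = 1.+2 by rewrite size_MXaddC size_XsubC oner_eq0 andbF.
have p_monic : p \is monic.
  rewrite monicE /p lead_coefDl ?lead_coefMX ?lead_coefXsubC //.
  by rewrite size_poly1 size_mulX ?size_XsubC // -size_poly_eq0 size_XsubC.
have [B charB] := exists_char_poly p_monic size_p.
have no_fixed (v : 'rV_2) k : (0 < k)%N -> v *m B ^+ k = v -> v = 0.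
  move=> k_gt0; apply: mx_fixed_eq0 => z; rewrite charB /p rmorphD rmorphM rmorphB /=.
  rewrite map_polyX map_polyC rmorph1 /= rootE !hornerE => /eqP.
  exact: hyperbolic_root_not_unity.
exists 2, B; split.
  have := Cayley_Hamilton B; rewrite charB /p rmorphD rmorphM rmorphB /= horner_mx_X.
  rewrite horner_mx_C rmorph1 => /eqP; rewrite addr_eq0 => /eqP B_inv.
  have B3 : B * 3%:M = 3%:M * B by rewrite -!mulmxE scalar_mxC.
  case: (@mulmx1_unit _ _ B (3%:M - B)) => //.
  by rewrite mulmxE mulrBr B3 -mulrBl -[3%:M - B]opprB mulNr B_inv opprK.
apply/seteqP; split => [[k|] [v v_ne0 vt] //|_ ->].
  by case: vt => k_gt0 [+ _]; rewrite iter_mulmxr => /(no_fixed v k k_gt0).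
have [v /eqP v_ne0] := nonzero_row 1; exists v => // m m_gt0.
by rewrite iter_mulmxr => /(no_fixed v m m_gt0).
Qed.

Lemma orbit_type_block t : (forall d, t = Some d -> (0 < d)%N) ->
  exists n (M : 'M[int]_n), M \in unitmx /\ nz_types M = [set t].
Proof.
by case: t => [d /(_ d erefl)|_]; [exact: cyclotomic_block | exact: hyperbolic_block].
Qed.

Section Realization.
Variable T : set (option nat).
Hypothesis T_lcm : forall t t', T t -> T t' -> T (lcm_type t t').
Hypothesis T_pos : forall d, T (Some d) -> (0 < d)%N.

Lemma realize_nz_types_seq (r : seq (option nat)) : [set` r] `<=` T ->
  exists n (M : 'M[int]_n), [/\ M \in unitmx, [set` r] `<=` nz_types M & nz_types M `<=` T].
Proof.
elim: r => [|t r IH] rT.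
  by exists 0%N, 1%:M; split => [||t [v]]; rewrite ?unitmx1 ?thinmx0.
have [|n1 [M1 [M1_unit r_nz1 nz1_T]]] := IH.
  by move=> u ur; apply: rT; rewrite /= in_cons ur orbT.
have tT : T t by apply: rT; exact: mem_head.
have [|n2 [M2 [M2_unit nz2]]] := @orbit_type_block t.
  by move=> d td; apply: T_pos; rewrite -td.
exists (n1 + n2)%N, (block_mx M1 0 0 M2); split; first exact: block_unitmx.
  by rewrite nz_types_block nz2 => u; rewrite /= in_cons => /orP [/eqP ->|/r_nz1 ?];
    [left; right | left; left].
rewrite nz_types_block nz2 => u [[/nz1_T //|-> //]|[u1 /nz1_T u1_T [_ -> <-]]].
exact: T_lcm.
Qed.

Lemma realize_nz_types : finite_set T ->
  exists n (M : 'M[int]_n), M \in unitmx /\ nz_types M = T.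
Proof.
move=> /finite_seqP [s eT]; have [|n [M [M_unit s_nz nz_T]]] := @realize_nz_types_seq s.
  by rewrite eT.
by exists n, M; split => //; apply/seteqP; split => //; rewrite eT.
Qed.

End Realization.

(** * Cycle conditions and integer models *)

Lemma Zn_model_of_automorphism (A : Type) (f : A -> A) n (op : A -> A -> A) :
  group_iso_Zn op n -> is_automorphism op f ->
  exists (M : 'M[int]_n) (phi : A -> 'rV[int]_n),
    [/\ M \in unitmx, bijective phi & forall x, phi (f x) = phi x *m M].
Proof.
move=> [_ [_ [phi [[psi phiK psiK] phi_op]]]] [[f' fK f'K] f_op].
have psi_op v w : psi (v + w) = op (psi v) (psi w).
  by apply: (can_inj phiK); rewrite psiK phi_op !psiK.
have f'_op x y : f' (op x y) = op (f' x) (f' y).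
  by apply: (can_inj fK); rewrite f_op !f'K.
have [M hM] : exists M : 'M[int]_n, forall v, phi (f (psi v)) = v *m M.
  by apply: additive_mulmxr => v w; rewrite psi_op f_op phi_op.
have [M' hM'] : exists M' : 'M[int]_n, forall v, phi (f' (psi v)) = v *m M'.
  by apply: additive_mulmxr => v w; rewrite psi_op f'_op phi_op.
exists M, phi; split; last by move=> x; rewrite -hM phiK.
  by apply: (unitmx_of_right_inverse (M' := M')) => v; rewrite -hM -hM' phiK fK psiK.
by exists psi.
Qed.

Lemma Zn_structure_of_model (A : Type) (f : A -> A) n (M : 'M[int]_n) (h : A -> 'rV[int]_n) :
  bijective f -> bijective h -> (forall x, h (f x) = h x *m M) ->
  exists op, group_iso_Zn op n /\ is_automorphism op f.
Proof.
move=> f_bij [h' hK h'K] h_conj; exists (fun x y => h' (h x + h y)); split; last first.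
  split => // x y; apply: (can_inj hK).
  by rewrite h_conj !h'K mulmxDl -!h_conj.
split; first by move=> x y z; rewrite !h'K addrA.
split; last by exists h; split; [exists h' | move=> x y; rewrite h'K].
exists (h' 0); split => [x|x]; first by rewrite h'K add0r addr0 hK.
by exists (h' (- h x)); rewrite !h'K subrr addNr.
Qed.

Definition Zn_cycle_conditions (A : Type) (f : A -> A) (a0 : A) : Prop :=
  f a0 = a0 /\
  finite_set [set m : nat | exists C, is_cycle f C m] /\
  (forall (k : nat) (C : set A), is_cycle f C k -> C <> [set a0] ->
     infinite_set [set D : set A | is_cycle f D k]) /\
  ((exists C : set A, is_chain f C) -> infinite_set [set D : set A | is_chain f D]) /\
  (forall (al be : nat) (C1 C2 : set A),
     is_cycle f C1 al -> C1 <> [set a0] -> is_cycle f C2 be -> C2 <> [set a0] ->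
     exists C : set A, is_cycle f C (lcmn al be)).

Lemma Zn_cycle_conditions_of_model (A : Type) (f : A -> A) n (M : 'M[int]_n)
    (h : A -> 'rV[int]_n) :
  M \in unitmx -> bijective h -> (forall x, h (f x) = h x *m M) ->
  exists a0, Zn_cycle_conditions f a0.
Proof.
move=> M_unit h_bij h_conj; have [h' hK h'K] := h_bij.
have f_inj : injective f.
  by move=> x y /(congr1 h); rewrite !h_conj => /(can_inj (mulmxK M_unit)) /(can_inj hK).
have fa0 : f (h' 0) = h' 0 by apply: (can_inj hK); rewrite h_conj h'K mul0mx.
have h_ne0 x : x <> h' 0 -> h x != 0.
  by move=> xa0; apply: contra_notN xa0 => /eqP <-; rewrite hK.
have orbit_ne x : orbit_of f x <> [set h' 0] -> x <> h' 0.
  by apply: contra_not => ->; rewrite orbit_of_fixed.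
exists (h' 0); split; first exact: fa0.
split; first exact: cycle_lengths_finite h_bij h_conj.
split.
  move=> k _ [x [-> xk]] /orbit_ne /h_ne0 hx_ne0.
  exact: (infinite_orbits_of_type M_unit h_bij h_conj hx_ne0 (t := Some k)).
split.
  move=> [_ [x [_ x_ap]]]; have hx_ne0 : h x != 0.
    by apply: h_ne0 => xa0; apply: (x_ap 1%N isT); rewrite xa0; exact: fa0.
  exact: (infinite_orbits_of_type M_unit h_bij h_conj hx_ne0 (t := None)).
move=> al be _ _ [x1 [_ x1a]] _ [x2 [_ x2b]] _.
have [z zl] := cycle_length_lcm h_bij h_conj x1a x2b.
by exists (orbit_of f z), z.
Qed.

Section CycleConditions.
Variables (A : Type) (f : A -> A) (a0 : A).
Hypothesis conds : Zn_cycle_conditions f a0.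

Let orbit_ne x : x <> a0 -> orbit_of f x <> [set a0].
Proof. by move=> xa0 e; apply: xa0; have := orbit_of_refl f x; rewrite e. Qed.

Lemma infinite_orbits_of_conditions t :
  nonfixed_types f a0 t -> infinite_set (orbits_of_type f t).
Proof.
case: conds => _ [_ [inf_cycles [inf_chains _]]] [x xa0].
case: t => [k|] xt; first exact: inf_cycles (ex_intro _ x (conj erefl xt)) (orbit_ne xa0).
exact: inf_chains (ex_intro _ _ (ex_intro _ x (conj erefl xt))).
Qed.

Lemma nonfixed_types_finite : finite_set (nonfixed_types f a0).
Proof.
case: conds => _ [fin_lengths _].
apply: (@sub_finite_set _ _ (None |` Some @` [set m | exists C, is_cycle f C m])).
  by move=> [k|] [x _ xt]; [right; exists k => //; exists (orbit_of f x), x | left].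
by rewrite finite_setU; split; [exact: finite_set1 | exact: finite_image].
Qed.

Lemma nonfixed_types_lcm t t' : nonfixed_types f a0 t -> nonfixed_types f a0 t' ->
  nonfixed_types f a0 (lcm_type t t').
Proof.
case: conds => fa0 [_ [_ [_ lcm_lengths]]].
case: t t' => [a|] [b|] //= [x xa0 xa] [y ya0 yb].
have [C [z [_ zl]]] := lcm_lengths a b _ _ (ex_intro _ x (conj erefl xa)) (orbit_ne xa0)
  (ex_intro _ y (conj erefl yb)) (orbit_ne ya0).
case: (pselect (z = a0)) => [za0|]; last by exists z.
have l1 : lcmn a b = 1%N by rewrite za0 in zl; exact: period_unique zl (period1_fixed fa0).
have : (a %| 1)%N by rewrite -l1 dvdn_lcml.
by rewrite dvdn1 l1 => /eqP a1; exists x; rewrite // -a1.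
Qed.

Lemma nonfixed_types_pos d : nonfixed_types f a0 (Some d) -> (0 < d)%N.
Proof. by case=> x _ []. Qed.

End CycleConditions.

Lemma row_inj_dim_gt0 (A : Type) n (h : A -> 'rV[int]_n) (x y : A) :
  injective h -> x <> y -> (0 < n)%N.
Proof. by case: n h => // h h_inj; apply: contra_notP => _; apply: h_inj; rewrite !thinmx0. Qed.

(* [card_set_bijP] wants a pointed codomain; this makes ['rV[int]_n] pointed. *)
HB.instance Definition _ := isPointed.Build int 0.

Lemma Zn_model_of_conditions (A : Type) (f : A -> A) a0 :
  countably_infinite A -> bijective f -> Zn_cycle_conditions f a0 ->
  exists n (M : 'M[int]_n) (h : A -> 'rV[int]_n),
    [/\ (0 < n)%N, bijective h & forall x, h (f x) = h x *m M].
Proof.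
move=> [e [e' eK e'K]] [f' fK f'K] conds; have fa0 : f a0 = a0 by case: conds.
have [n [M [M_unit nzM]]] := realize_nz_types (nonfixed_types_lcm conds)
  (@nonfixed_types_pos _ f a0) (nonfixed_types_finite conds).
have [h [h_bij h_conj]] :
    exists h : A -> 'rV[int]_n, bijective h /\ forall x, h (f x) = mulmxr M (h x).
  have countA : countable [set: A].
    by apply/countable_injP; exists e' => x y _ _; exact: can_inj e'K x y.
  apply: (conjugate_of_reps_bij fK f'K (mulmxr_unitK M_unit) (mulmxr_unitKV M_unit)).
  apply: (reps_of_type_bij fK f'K (mulmxr_unitK M_unit) (mulmxr_unitKV M_unit) fa0
    (mul0mx _ M) countA (countableP _) (esym nzM)).
    exact: infinite_orbits_of_conditions.
  move=> t [v /eqP v_ne0 vt]; have id_bij : bijective (@id 'rV[int]_n) by exists id.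
  exact: (infinite_orbits_of_type (f := mulmxr M) M_unit id_bij (fun _ => erefl) v_ne0 vt).
exists n, M, h; split => //; case: (pselect (e 0%N = a0)) => [e0|e0].
  apply: (row_inj_dim_gt0 (bij_inj h_bij) (x := e 1%N) (y := a0)).
  by rewrite -e0 => /(can_inj eK).
exact: row_inj_dim_gt0 (bij_inj h_bij) e0.
Qed.

Local Close Scope ring_scope.

Theorem theorem3p9 (A : Type) (hA : countably_infinite A)
    (f : A -> A) (hf : bijective f) :
  (exists (n : nat) (op : A -> A -> A),
      (0 < n)%N /\ group_iso_Zn op n /\ is_automorphism op f)
  <->
  (exists a0 : A,
     (* (1) a0 is a fixed point, i.e. {a0} is a cycle of length 1 *)
     f a0 = a0 /\
     (* (2) finitely many distinct cycle lengths *)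
     finite_set [set m : nat | exists C, is_cycle f C m] /\
     (* (3) a non-zero cycle of length k forces infinitely many cycles of length k *)
     (forall (k : nat) (C : set A), is_cycle f C k -> C <> [set a0] ->
        infinite_set [set D : set A | is_cycle f D k]) /\
     (* (4) a chain forces infinitely many chains *)
     ((exists C : set A, is_chain f C) ->
        infinite_set [set D : set A | is_chain f D]) /\
     (* (5) lcm closure for lengths of non-zero cycles *)
     (forall (al be : nat) (C1 C2 : set A),
        is_cycle f C1 al -> C1 <> [set a0] ->
        is_cycle f C2 be -> C2 <> [set a0] ->
        exists C : set A, is_cycle f C (lcmn al be))).
Proof.
split => [[n [op [_ [Zn_op f_aut]]]]|[a0 conds]].
  have [M [h [M_unit h_bij h_conj]]] := Zn_model_of_automorphism Zn_op f_aut.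
  exact: Zn_cycle_conditions_of_model M_unit h_bij h_conj.
have [n [M [h [n_gt0 h_bij h_conj]]]] := Zn_model_of_conditions hA hf conds.
have [op [Zn_op f_aut]] := Zn_structure_of_model hf h_bij h_conj.
by exists n, op.
Qed.
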